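(* Let $(k^\times)^{\mathbb{Z}}$ be the group of all sequences $\alpha=(\alpha_n)_{n\in\mathbb{Z}}$ of nonzero elements of $k$ under componentwise multiplication. For $\alpha\in(k^\times)^{\mathbb{Z}}$ let $\phi_\alpha:H\to H$ be the linear map with $$\phi_\alpha(x^n)=x^n,\qquad \phi_\alpha(x^ny^m)=\Big(\prod_{i=0}^{m-1}\alpha_{n+i}\Big)x^ny^m\quad(n\in\mathbb{Z},\ m\geq 1).$$ Then the map $(k^\times)^{\mathbb{Z}}\to \mathrm{Aut}_0^{gr}(H)$, $\alpha\mapsto\phi_\alpha$, is a group isomorphism.
   Context: Let $k$ be a field and $0\neq q\in k$ not a root of unity. Let $H=k_q[x,x^{-1},y]$ be the $k$-algebra generated by $x,x^{-1},y$ subject to $xx^{-1}=x^{-1}x=1$, $yx=qxy$. It is a Hopf algebra with $\Delta(x)=x\otimes x$, $\Delta(x^{-1})=x^{-1}\otimes x^{-1}$, $\Delta(y)=y\otimes x+1\otimes y$, $\varepsilon(x)=\varepsilon(x^{-1})=1$, $\varepsilon(y)=0$, $S(x)=x^{-1}$, $S(y)=-yx^{-1}$. The elements $x^ny^m$ ($n\in\mathbb{Z}$, $m\in\mathbb{N}$) form a $k$-basis, and $\Delta(x^ny^m)=\sum_{i=0}^m\binom{m}{i}_q x^ny^i\otimes x^{n+i}y^{m-i}$, where $(n)_q=1+q+\cdots+q^{n-1}$, $(n)!_q=(n)_q(n-1)_q\cdots(1)_q$, $(0)!_q=1$, and $\binom{m}{i}_q=\frac{(m)!_q}{(i)!_q(m-i)!_q}$.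 Let $H_0=\mathrm{span}\{x^n:n\in\mathbb{Z}\}$ and $H(m)=H_0y^m$; then $H=\bigoplus_{m\geq0}H(m)$ is a graded coalgebra. $\mathrm{Aut}_c(H)$ is the group (under composition) of all coalgebra automorphisms of $H$; $\mathrm{Aut}_0(H)=\{\phi\in\mathrm{Aut}_c(H):\phi(1)=1\}$; $\mathrm{Aut}_c^{gr}(H)=\{\phi\in\mathrm{Aut}_c(H):\phi(H(m))\subseteq H(m)\ \forall m\geq0\}$; $\mathrm{Aut}_0^{gr}(H)=\mathrm{Aut}_c^{gr}(H)\cap\mathrm{Aut}_0(H)$. *)

From HB Require Import structures.
From mathcomp Require Import all_boot all_order all_algebra.
From mathcomp Require Import finmap.
From mathcomp.multinomials Require Import monalg.
Set Implicit Arguments. Unset Strict Implicit. Unset Printing Implicit Defensive.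
Import Order.TTheory GRing.Theory Num.Theory.
Local Open Scope ring_scope.

(* Basis index: (n, m) stands for the basis element x^n y^m of H = k_q[x,x^-1,y]. *)
Definition B := (int * nat)%type.

(* The underlying vector space of H: finitely supported k-combinations of x^n y^m. *)
Definition H (k : fieldType) := {malg k[B]}.
(* H (x) H, with basis (x^n y^m) (x) (x^n' y^m'). *)
Definition HH (k : fieldType) := {malg k[(B * B)%type]}.

Definition qnum (k : fieldType) (q : k) (n : nat) : k := \sum_(i < n) q ^+ i.
Definition qfact (k : fieldType) (q : k) (n : nat) : k := \prod_(j < n) qnum q j.+1.
Definition qbinom (k : fieldType) (q : k) (m i : nat) : k :=
  qfact q m / (qfact q i * qfact q (m - i)).

(* Comultiplication on basis elements:
   Delta(x^n y^m) = sum_{i=0}^m binom(m,i)_q x^n y^i (x) x^{n+i} y^{m-i} *)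
Definition Delta_basis (k : fieldType) (q : k) (b : B) : HH k :=
  \sum_(i < b.2.+1) qbinom q b.2 i *: << (((b.1, (i : nat)) : B), ((b.1 + (i : nat)%:Z, (b.2 - i)%N) : B)) >>.

Definition Delta (k : fieldType) (q : k) (h : H k) : HH k :=
  \sum_(b <- msupp h) h@_b *: Delta_basis q b.

Definition eps (k : fieldType) (h : H k) : k :=
  \sum_(b <- msupp h | b.2 == 0%N) h@_b.

Definition oneH (k : fieldType) : H k := << ((0 : int), 0%N) >>.

Definition tens (k : fieldType) (u v : H k) : HH k :=
  \sum_(a <- msupp u) \sum_(b <- msupp v) (u@_a * v@_b) *: << (a, b) >>.

Definition tensmap (k : fieldType) (f g : H k -> H k) (T : HH k) : HH k :=
  \sum_(c <- msupp T) T@_c *: tens (f << c.1 >>) (g << c.2 >>).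

Definition is_coalg_aut (k : fieldType) (q : k) (f : H k -> H k) : Prop :=
  [/\ linear f, bijective f,
      (forall h, Delta q (f h) = tensmap f f (Delta q h)) &
      (forall h, eps (f h) = eps h)].

Definition in_Hm (k : fieldType) (m : nat) (h : H k) : Prop :=
  forall b, b \in msupp h -> b.2 = m.

Definition Aut0gr (k : fieldType) (q : k) (f : H k -> H k) : Prop :=
  [/\ is_coalg_aut q f, f (oneH k) = oneH k &
      (forall m h, in_Hm m h -> in_Hm m (f h))].

Definition phi (k : fieldType) (alpha : int -> k) (h : H k) : H k :=
  \sum_(b <- msupp h) (h@_b * \prod_(i < b.2) alpha (b.1 + (i : nat)%:Z)) *: << b >>.

From HB Require Import structures.
From mathcomp Require Import all_boot all_order all_algebra.
From mathcomp Require Import finmap.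
From mathcomp.multinomials Require Import monalg.
From mathcomp Require Import zify ring.
Import GRing.Theory.
Local Open Scope ring_scope.

(* [phi alpha] is diagonal in the basis x^n y^m, with weights
   w(n, m) = alpha_n ... alpha_(n+m-1) satisfying w(n, i + j) = w(n, i) w(n + i, j);
   as Delta(x^n y^m) only involves the tensors x^n y^i (x) x^(n+i) y^(m-i), this is
   exactly what comultiplicativity asks of a diagonal map.
   Conversely let f be in Aut_0^gr(H).  The q-binomials are nonzero since q is not a
   root of unity, so comparing coefficients in Delta(f(x^n y^(i+j))) =
   (f (x) f)(Delta(x^n y^(i+j))) and using that f is graded gives
     [c = a + i] f(x^n y^(i+j))_(a, i+j) = f(x^n y^i)_(a, i) f(x^(n+i) y^j)_(c, j).
   For i = j = 0 this makes f(x^n) a grouplike x^(s n); the cases (i, j) = (0, 1) and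
   (1, 0) give s (n + 1) = s n + 1, so f(1) = 1 forces f(x^n) = x^n.  Then the case
   i = 0 makes f(x^n y^m) a multiple of x^n y^m, and the case i = 1 factors the
   multipliers as the weights of phi_alpha, alpha_n being the coefficient of x^n y in
   f(x^n y). *)

Section MalgFacts.
Context {K : choiceType} {R : nzRingType}.

(* [raddf_sum] gives this with [mcoeff] seen through its additive structure,
   where [mcoeffZ] and friends no longer match. *)
Lemma mcoeff_sum (I : Type) (r : seq I) (F : I -> {malg R[K]}) x :
  (\sum_(i <- r) F i)@_x = \sum_(i <- r) (F i)@_x.
Proof. exact: raddf_sum. Qed.

Lemma malgUZ (b : K) (c : R) : << c *g b >> = c *: (<< b >> : {malg R[K]}).
Proof. by apply/malgP => z; rewrite mcoeffZ !mcoeffU mulr_natr. Qed.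

Lemma linear_malgE {V : lmodType R} (f : {linear {malg R[K]} -> V}) g :
  f g = \sum_(b <- msupp g) g@_b *: f << b >>.
Proof.
rewrite {1}(monalgE g) linear_sum; apply: eq_bigr => b _.
by rewrite malgUZ linearZ.
Qed.

Lemma mcoeff_scale_linear (P : {malg R[K]} -> {malg R[K]}) (d : K -> R) :
  (forall g z, (P g)@_z = g@_z * d z) -> linear P.
Proof.
by move=> PE a u v; apply/malgP => z; rewrite !(PE, mcoeffD, mcoeffZ) mulrDl mulrA.
Qed.

Lemma sum_msupp_single (z0 : K) (g : {malg R[K]}) (F : K -> R) :
  (forall z, z != z0 -> g@_z * F z = 0) ->
  \sum_(z <- msupp g) g@_z * F z = g@_z0 * F z0.
Proof.
move=> F0; have [z0g|z0g] := boolP (z0 \in msupp g).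
  by rewrite (bigD1_seq z0) ?fset_uniq //= big1 ?addr0 // => z /F0.
rewrite (mcoeff_outdom z0g) mul0r big1_seq // => z /andP[_ zg].
by apply: F0; apply: contraNneq z0g => <-.
Qed.

Lemma mcoeff_witness {g : {malg R[K]}} : g != 0 -> {b | g@_b != 0}.
Proof.
case: (fset_0Vmem (msupp g)) => [g0|[b gb]]; last by exists b; rewrite mcoeff_neq0.
by rewrite (monalgE g) g0 big_nil eqxx.
Qed.

End MalgFacts.

Section QNumbers.
Context {k : fieldType} {q : k}.
Hypothesis q_nonroot : forall n : nat, (0 < n)%N -> q ^+ n != 1.

Lemma qnum_neq0 n : qnum q n.+1 != 0.
Proof.
apply/negP => /eqP qn0; have := q_nonroot n.+1 (ltn0Sn n).
by rewrite -subr_eq0 subrX1 -/(qnum q n.+1) qn0 mulr0 eqxx.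
Qed.

Lemma qfact_neq0 n : qfact q n != 0.
Proof. by apply/prodf_neq0 => j _; apply: qnum_neq0. Qed.

Lemma qbinom_neq0 m i : qbinom q m i != 0.
Proof. by rewrite /qbinom mulf_neq0 ?invr_neq0 ?mulf_neq0 ?qfact_neq0. Qed.

End QNumbers.

Section Coefficients.
Context {k : fieldType} (q : k).

Lemma Hcoef_ext (u v : H k) :
  (forall (n : int) (m : nat), u@_(n, m) = v@_(n, m)) -> u = v.
Proof. by move=> uv; apply/malgP => -[n m]; apply: uv. Qed.

Lemma Delta_basisE (b : B) (a c : int) (i j : nat) :
  (Delta_basis q b)@_((a, i), (c, j)) =
  if b == (a, (i + j)%N) then (c == a + i%:Z)%:R * qbinom q (i + j) i else 0.
Proof.
case: b => n m; rewrite /Delta_basis mcoeff_sum /=.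
under eq_bigr do rewrite mcoeffZ mcoeffU.
case: eqP => [[-> ->]|nm_neq].
  have ltii : (i < (i + j).+1)%N by lia.
  rewrite (bigD1 (Ordinal ltii)) //= big1 ?addr0.
    by rewrite addKn !xpair_eqE !eqxx /= andbT mulrC eq_sym.
  move=> l neq_li; have /negbTE neq_li' : (l : nat) != i.
    by apply: contra_neq neq_li => eq_li; apply: val_inj.
  by rewrite !xpair_eqE neq_li' andbF /= mulr0.
rewrite big1 // => l _; case: eqP => [[na li _ mj]|]; last by rewrite mulr0.
by case: nm_neq; rewrite na; congr pair; have := ltn_ord l; lia.
Qed.

Lemma DeltaE (h : H k) (a c : int) (i j : nat) :
  (Delta q h)@_((a, i), (c, j)) =
  (c == a + i%:Z)%:R * h@_(a, (i + j)%N) * qbinom q (i + j) i.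
Proof.
rewrite /Delta mcoeff_sum.
under eq_bigr do rewrite mcoeffZ.
rewrite (sum_msupp_single (a, (i + j)%N)) => [|b /negbTE b_neq].
  by rewrite Delta_basisE eqxx mulrCA mulrA.
by rewrite Delta_basisE b_neq mulr0.
Qed.

Lemma tensE (u v : H k) x y : (tens u v)@_(x, y) = u@_x * v@_y.
Proof.
rewrite /tens mcoeff_sum.
under eq_bigr do rewrite mcoeff_sum (eq_bigr _ (fun b _ => mcoeffZ _ _ _)) /=.
under eq_bigr do rewrite -(eq_bigr _ (fun b _ => mulrA _ _ _)) -mulr_sumr.
rewrite (sum_msupp_single x) => [|a a_neq]; last first.
  by rewrite big1 ?mulr0 // => b _; rewrite mcoeffU xpair_eqE (negbTE a_neq) mulr0.
congr (_ * _); rewrite (sum_msupp_single y) => [|b b_neq].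
  by rewrite mcoeffU !eqxx mulr1.
by rewrite mcoeffU xpair_eqE andbC (negbTE b_neq) mulr0.
Qed.

Lemma tensmapE (f g : H k -> H k) (T : HH k) x y :
  (tensmap f g T)@_(x, y) =
  \sum_(z <- msupp T) T@_z * ((f << z.1 >>)@_x * (g << z.2 >>)@_y).
Proof. by rewrite /tensmap mcoeff_sum; apply: eq_bigr => z _; rewrite mcoeffZ tensE. Qed.

Lemma tensmap_diagE {f g : H k -> H k} {d e : B -> k} :
  (forall b, f << b >> = d b *: << b >>) -> (forall b, g << b >> = e b *: << b >>) ->
  forall (T : HH k) x y, (tensmap f g T)@_(x, y) = T@_(x, y) * (d x * e y).
Proof.
move=> fU gU T x y; rewrite tensmapE (sum_msupp_single (x, y)) => [|[a b] /=].
  by rewrite fU gU !mcoeffZ !mcoeffU !eqxx !mulr1.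
rewrite xpair_eqE negb_and fU gU !mcoeffZ !mcoeffU.
by case/orP=> /negbTE ->; rewrite /= ?mulr0 ?mul0r ?mulr0.
Qed.

End Coefficients.

Section PhiAlpha.
Context {k : fieldType}.
Implicit Types (alpha beta : int -> k) (h : H k).

Definition phi_weight alpha (b : B) : k := \prod_(i < b.2) alpha (b.1 + i%:Z).

Lemma phi_weight0 alpha (n : int) : phi_weight alpha (n, 0%N) = 1.
Proof. exact: big_ord0. Qed.

Lemma phi_weight1 alpha (n : int) : phi_weight alpha (n, 1%N) = alpha n.
Proof. by rewrite /phi_weight big_ord1 addr0. Qed.

Lemma phi_weightD alpha (a : int) (i j : nat) :
  phi_weight alpha (a, (i + j)%N) = phi_weight alpha (a, i) * phi_weight alpha (a + i%:Z, j).
Proof.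
rewrite /phi_weight big_split_ord /=; congr (_ * _); apply: eq_bigr => l _.
by rewrite PoszD addrA.
Qed.

Lemma phi_weightM alpha beta b :
  phi_weight (fun n => alpha n * beta n) b = phi_weight alpha b * phi_weight beta b.
Proof. exact: big_split. Qed.

Lemma phi_weight_neq0 alpha b : (forall n, alpha n != 0) -> phi_weight alpha b != 0.
Proof. by move=> alpha_neq0; apply/prodf_neq0. Qed.

Lemma phiE alpha h b : (phi alpha h)@_b = h@_b * phi_weight alpha b.
Proof.
rewrite /phi mcoeff_sum.
under eq_bigr do rewrite mcoeffZ -mulrA.
rewrite (sum_msupp_single b) => [|c /negbTE c_neq]; first by rewrite mcoeffU eqxx mulr1.
by rewrite mcoeffU c_neq !mulr0.
Qed.

Lemma phi_is_linear alpha : linear (phi alpha).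
Proof. exact: mcoeff_scale_linear (phiE alpha). Qed.

HB.instance Definition _ alpha :=
  GRing.isLinear.Build k (H k) (H k) *:%R (phi alpha) (phi_is_linear alpha).

Lemma phiU alpha b : phi alpha << b >> = phi_weight alpha b *: << b >>.
Proof.
apply/malgP => c; rewrite phiE mcoeffZ mcoeffU.
by case: eqP => [->|]; rewrite ?mulr1 ?mul1r ?mulr0 ?mul0r.
Qed.

Lemma msupp_phi alpha h : (forall n, alpha n != 0) -> msupp (phi alpha h) = msupp h.
Proof.
move=> alpha_neq0; apply/fsetP => b.
by rewrite -!mcoeff_neq0 phiE mulf_eq0 negb_or phi_weight_neq0 ?andbT.
Qed.

Lemma phiM alpha beta h :
  phi (fun n => alpha n * beta n) h = phi alpha (phi beta h).
Proof.
apply/malgP => b; rewrite [LHS]phiE [RHS]phiE phiE.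
by rewrite phi_weightM mulrA mulrAC.
Qed.

Lemma phi_id alpha h : (forall n, alpha n = 1) -> phi alpha h = h.
Proof.
move=> alpha1; apply/malgP => b.
by rewrite phiE /phi_weight big1 ?mulr1 // => i _; apply: alpha1.
Qed.

Lemma phi_bij alpha : (forall n, alpha n != 0) -> bijective (phi alpha).
Proof.
move=> alpha_neq0; exists (phi (fun n => (alpha n)^-1)) => h;
  by rewrite -phiM phi_id // => n; rewrite ?mulVf ?mulfV.
Qed.

Lemma Delta_phi (q : k) alpha h :
  Delta q (phi alpha h) = tensmap (phi alpha) (phi alpha) (Delta q h).
Proof.
(* The rewrites are targeted: matching a [Delta] term against a [tensmap] term
   makes the unifier unfold both sums, which is prohibitively slow. *)
apply/malgP => -[[a i] [c j]].
rewrite [RHS](tensmap_diagE (phiU alpha) (phiU alpha)) [LHS]DeltaE [in RHS]DeltaE phiE.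
have [->|] := eqP; last by rewrite !mul0r.
by rewrite phi_weightD; ring.
Qed.

Lemma eps_phi alpha h : (forall n, alpha n != 0) -> eps (phi alpha h) = eps h.
Proof.
move=> alpha_neq0; rewrite /eps msupp_phi //.
by apply: eq_bigr => -[n m] /= /eqP ->; rewrite phiE phi_weight0 mulr1.
Qed.

Lemma phi_Aut0gr (q : k) alpha : (forall n, alpha n != 0) -> Aut0gr q (phi alpha).
Proof.
move=> alpha_neq0; split; first split.
- exact: phi_is_linear.
- exact: phi_bij.
- exact: Delta_phi.
- by move=> h; apply: eps_phi.
- by rewrite /oneH phiU phi_weight0 scale1r.
- by move=> m h h_m b; rewrite msupp_phi //; apply: h_m.
Qed.

Lemma phi_inj alpha beta : (forall h, phi alpha h = phi beta h) -> alpha =1 beta.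
Proof.
move=> eq_phi n; have := congr1 (mcoeff (n, 1%N)) (eq_phi << (n, 1%N) >>).
by rewrite [LHS]phiE [RHS]phiE mcoeffU eqxx !mul1r !phi_weight1.
Qed.

End PhiAlpha.

Section Surjectivity.
Variables (k : fieldType) (q : k) (f : H k -> H k).
Hypothesis q_nonroot : forall n : nat, (0 < n)%N -> q ^+ n != 1.
Hypothesis f_Aut0gr : Aut0gr q f.

Let f_linear : linear f. Proof. by case: f_Aut0gr => -[]. Qed.
HB.instance Definition _ := GRing.isLinear.Build k (H k) (H k) *:%R f f_linear.

Let Delta_f h : Delta q (f h) = tensmap f f (Delta q h).
Proof. by case: f_Aut0gr => -[]. Qed.

Lemma fU_coef_off n m (b : B) : b.2 != m -> (f << (n, m) >>)@_b = 0.
Proof.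
move=> b_m; apply: mcoeff_outdom; apply: contra b_m => b_supp; apply/eqP.
case: f_Aut0gr => _ _ /(_ m << (n, m) >>); apply=> // c.
by rewrite msuppU oner_eq0 inE => /eqP ->.
Qed.

Lemma fU_neq0 b : f << b >> != 0.
Proof.
case: f_Aut0gr => -[_ /bij_inj f_inj _ _] _ _.
by rewrite -(linear0 f) (inj_eq f_inj) monalgU_eq0 oner_eq0.
Qed.

Lemma fU_coef_split (n a c : int) (i j : nat) :
  (c == a + i%:Z)%:R * (f << (n, (i + j)%N) >>)@_(a, (i + j)%N) =
  (f << (n, i) >>)@_(a, i) * (f << (n + i%:Z, j) >>)@_(c, j).
Proof.
have := congr1 (mcoeff ((a, i), (c, j))) (Delta_f << (n, (i + j)%N) >>).
(* Only the term x^n y^i (x) x^(n+i) y^j of the comultiplication survives: the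
   others vanish by gradedness of f or have no coefficient in Delta. *)
rewrite [LHS]DeltaE [RHS]tensmapE (sum_msupp_single ((n, i), (n + i%:Z, j))).
  by rewrite DeltaE mcoeffU !eqxx !mul1r [RHS]mulrC => /(mulIf (qbinom_neq0 q_nonroot _ _)).
move=> [[n' i'] [c' j']] /= z_neq; rewrite DeltaE mcoeffU.
case: (eqVneq i i') => [ii'|i_neq]; last by rewrite fU_coef_off ?mul0r ?mulr0.
case: (eqVneq j j') => [jj'|j_neq]; last by rewrite [X in _ * X]mulrC fU_coef_off ?mul0r ?mulr0.
subst i' j'; case: eqP => [c'E|_]; last by rewrite !mul0r.
case: eqP => [[nn']|_]; last by rewrite mulr0 !mul0r.
by subst; rewrite eqxx in z_neq.
Qed.

Lemma fU_grouplike (n : int) : exists s : int, f << (n, 0%N) >> = << (s, 0%N) >>.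
Proof.
set g := f << (n, 0%N) >>.
have coef_sq (a c : int) : (c == a)%:R * g@_(a, 0%N) = g@_(a, 0%N) * g@_(c, 0%N).
  by have := fU_coef_split n a c 0 0; rewrite !addr0.
have [[s m] gsm] := mcoeff_witness (fU_neq0 (n, 0%N)).
have m0 : m = 0%N by apply/eqP; apply: contraNT gsm => m_neq; rewrite fU_coef_off.
subst m; have gs1 : g@_(s, 0%N) = 1.
  by apply: (mulfI gsm); rewrite -coef_sq eqxx mul1r mulr1.
exists s; apply: Hcoef_ext => a i; rewrite mcoeffU.
case: eqP => [[<- <-] //|sa_neq].
have [i0|i_neq] := eqVneq i 0%N; last by rewrite fU_coef_off.
subst i; have := coef_sq a s; rewrite gs1 mulr1.
by case: eqP => [sa|_ <-]; [case: sa_neq; rewrite sa | rewrite mul0r].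
Qed.

Lemma grouplike_succ {n s t : int} :
  f << (n, 0%N) >> = << (s, 0%N) >> -> f << (n + 1, 0%N) >> = << (t, 0%N) >> ->
  t = s + 1.
Proof.
move=> fs ft; set g := f << (n, 1%N) >>.
have [[c m] gcm] := mcoeff_witness (fU_neq0 (n, 1%N)).
have m1 : m = 1%N by apply/eqP; apply: contraNT gcm => m_neq; rewrite fU_coef_off.
subst m; have gs_neq : g@_(s, 1%N) != 0.
  have := fU_coef_split n s c 0 1; rewrite add0n !addr0 fs mcoeffU eqxx mul1r.
  by case: eqP => [<- //|_ g0]; rewrite -g0 mul0r eqxx in gcm.
have := fU_coef_split n s t 1 0; rewrite addn0 ft mcoeffU eqxx mulr1.
by case: eqP => [//|_]; rewrite mul0r => /esym/eqP; rewrite (negbTE gs_neq).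
Qed.

Lemma fU_deg0 (n : int) : f << (n, 0%N) >> = << (n, 0%N) >>.
Proof.
elim/int_rec: n => [|n IHn|n IHn].
- by case: f_Aut0gr.
- have [t ft] := fU_grouplike n.+1; rewrite ft.
  by rewrite -addn1 PoszD in ft *; rewrite (grouplike_succ IHn ft).
- have [s fs] := fU_grouplike (- n.+1%:Z); rewrite fs.
  have shift : - n.+1%:Z + 1 = - n%:Z by lia.
  rewrite -shift in IHn.
  by have /addIr <- := grouplike_succ fs IHn.
Qed.

Lemma fU_diag (n : int) (m : nat) : f << (n, m) >> = (f << (n, m) >>)@_(n, m) *: << (n, m) >>.
Proof.
apply: Hcoef_ext => c i; rewrite mcoeffZ mcoeffU.
case: eqP => [[<- <-]|nm_neq]; first by rewrite mulr1.
have [im|i_neq] := eqVneq i m; last by rewrite fU_coef_off ?mulr0.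
subst i; have := fU_coef_split n n c 0 m; rewrite add0n !addr0 fU_deg0 mcoeffU eqxx /= mul1r mulr0.
by case: eqP => [cn|_ <-]; [case: nm_neq; rewrite cn | rewrite /= mul0r].
Qed.

Let alpha (n : int) := (f << (n, 1%N) >>)@_(n, 1%N).

Lemma fU_coef_weight (n : int) (m : nat) : (f << (n, m) >>)@_(n, m) = phi_weight alpha (n, m).
Proof.
elim: m n => [|m IHm] n; first by rewrite fU_deg0 mcoeffU eqxx phi_weight0.
have := fU_coef_split n n (n + 1) 1 m; rewrite eqxx mul1r IHm add1n => ->.
by rewrite (phi_weightD alpha n 1) phi_weight1.
Qed.

Lemma alpha_neq0 n : alpha n != 0.
Proof.
apply: contra (fU_neq0 (n, 1%N)) => /eqP alpha0.
by rewrite fU_diag -/(alpha n) alpha0 scale0r.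
Qed.

Lemma Aut0gr_eq_phi : exists2 alpha : int -> k, (forall n, alpha n != 0) & f =1 phi alpha.
Proof.
exists alpha => [|h]; first exact: alpha_neq0.
rewrite (linear_malgE f) (linear_malgE (phi alpha)); apply: eq_bigr => -[n m] _.
by congr (_ *: _); rewrite [RHS]phiU -fU_coef_weight; apply: fU_diag.
Qed.

End Surjectivity.

Theorem theorem2p12 (k : fieldType) (q : k) (hq0 : q != 0)
    (hq : forall n : nat, (0 < n)%N -> q ^+ n != 1) :
  (forall alpha : int -> k, (forall n, alpha n != 0) -> Aut0gr q (phi alpha)) /\
  (forall alpha beta : int -> k, (forall n, alpha n != 0) -> (forall n, beta n != 0) ->
     forall h, phi (fun n => alpha n * beta n) h = phi alpha (phi beta h)) /\
  (forall alpha beta : int -> k, (forall n, alpha n != 0) -> (forall n, beta n != 0) ->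
     (forall h, phi alpha h = phi beta h) -> forall n, alpha n = beta n) /\
  (forall f : H k -> H k, Aut0gr q f ->
     exists2 alpha : int -> k, (forall n, alpha n != 0) & forall h, f h = phi alpha h).
Proof.
split; first by move=> alpha; apply: phi_Aut0gr.
split; first by move=> alpha beta _ _; apply: phiM.
split; first by move=> alpha beta _ _; apply: phi_inj.
by move=> f; apply: Aut0gr_eq_phi.
Qed.
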